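(* Let $n\ge2$, $v\in\tilde{S}_n$ and $r\in\mathbb{Z}$. Let $R(\Psi^+_r(v))$ denote the set of all reduced words of all elements of $\Psi^+_r(v)$ and $R(\Psi^-_r(v))$ the set of all reduced words of all elements of $\Psi^-_r(v)$, each reduced word $a$ of an element $w\gtrdot v$ being regarded as the reduced $v$-marked word $(a,i)$ with $i$ the unique index such that deleting $a_i$ gives a reduced word of $v$. Then the map $\phi^v$ restricts to a bijection $\phi^v_r: R(\Psi^+_r(v))\to R(\Psi^-_r(v))$.
   Context: $\tilde{S}_n$ is the affine symmetric group: bijections $w:\mathbb{Z}\to\mathbb{Z}$ with $w(i+n)=w(i)+n$ and $\sum_{i=1}^n w(i)=\sum_{i=1}^n i$, a Coxeter group with simple reflections $s_0,\dots,s_{n-1}$ ($s_i$ swaps $i+kn$ and $i+1+kn$ for all $k$). For $r\not\equiv s\pmod n$, $t_{r,s}$ is the unique element swapping $r$ and $s$ and fixing every integer not congruent to $r$ or $s$ mod $n$. $\ell$ is Coxeter length, $R(w)$ the set of reduced words of $w$ (words in letters $\{0,\dots,n-1\}$). $v\lessdot w$ means $w=vt_{p,q}$ for some reflection $t_{p,q}$ and $\ell(w)=\ell(v)+1$. $\Psi^+_r(v)$ is the set of $w$ with $v\lessdot w$ and $w=vt_{r,s}$ for some $s>r$; $\Psi^-_r(v)$ is the set of $w$ with $v\lessdot w$ and $w=vt_{s,r}$ for some $s<r$. (For $w\gtrdot v$ and $a\in R(w)$ there is a unique index $i$ such that deleting $a_i$ gives a word in $R(v)$.) A $v$-marked word is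 a pair $(a,i)$ with $a=a_1\cdots a_l$ a word in letters $\{0,\dots,n-1\}$ and $i\in[1,l]$ such that $a_1\cdots\widehat{a_i}\cdots a_l\in R(v)$; it is reduced if $a$ is a reduced word. The affine Little graph has the $v$-marked words as vertices and, from each $(a,i)$, a unique edge $(a,i)\to(a',j)$, where $a'$ is obtained from $a$ by replacing $a_i$ by $a_i-1$ (mod $n$), and $j=i$ if $a'$ is reduced, while otherwise $j$ is the unique index $j\ne i$ with $a'_1\cdots\widehat{a'_j}\cdots a'_l\in R(v)$ (which exists and is unique). Every vertex has exactly one incoming edge, so the components are finite directed cycles. For a reduced $v$-marked word $(a,i)$, $\phi^v(a,i)$ is the first reduced $v$-marked word strictly after $(a,i)$ along its cycle. *)

(* Affine symmetric group \tilde S_n realized as functions int -> int. *)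
From mathcomp Require Import all_boot all_order all_algebra.
Set Implicit Arguments. Unset Strict Implicit. Unset Printing Implicit Defensive.
Import Order.TTheory GRing.Theory Num.Theory.
Local Open Scope ring_scope.

Definition in_affS (n : nat) (w : int -> int) : Prop :=
  bijective w /\ (forall x : int, w (x + n%:Z) = w x + n%:Z) /\
  \sum_(1 <= i < n.+1) w (i%:Z) = \sum_(1 <= i < n.+1) (i%:Z : int).

Definition cong (n : nat) (x y : int) : bool := ((x %% n%:Z)%Z == (y %% n%:Z)%Z).

Definition sref (n i : nat) (x : int) : int :=
  if cong n x (i%:Z) then x + 1
  else if cong n x (i.+1%:Z) then x - 1 else x.

Definition tref (n : nat) (r s : int) (x : int) : int :=
  if cong n x r then x + (s - r)
  else if cong n x s then x - (s - r) else x.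

Definition word_ok (n : nat) (a : seq nat) : bool := all (fun k => (k < n)%N) a.

Definition weval (n : nat) (a : seq nat) : int -> int :=
  foldr (fun k f => fun x => sref n k (f x)) id a.

Definition represents (n : nat) (a : seq nat) (w : int -> int) : Prop :=
  word_ok n a /\ forall x, weval n a x = w x.

Definition length_is (n : nat) (w : int -> int) (l : nat) : Prop :=
  (exists a, represents n a w /\ size a = l) /\
  (forall a, represents n a w -> (l <= size a)%N).

Definition redword_of (n : nat) (a : seq nat) (w : int -> int) : Prop :=
  represents n a w /\ forall b, represents n b w -> (size a <= size b)%N.

Definition reduced (n : nat) (a : seq nat) : Prop := redword_of n a (weval n a).

Definition covers (n : nat) (v w : int -> int) : Prop :=
  (exists p q : int, ~~ cong n p q /\ forall x, w x = v (tref n p q x)) /\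
  exists l, length_is n v l /\ length_is n w l.+1.

Definition Psi_plus (n : nat) (v : int -> int) (r : int) (w : int -> int) : Prop :=
  covers n v w /\
  exists s : int, r < s /\ ~~ cong n r s /\ forall x, w x = v (tref n r s x).

Definition Psi_minus (n : nat) (v : int -> int) (r : int) (w : int -> int) : Prop :=
  covers n v w /\
  exists s : int, s < r /\ ~~ cong n s r /\ forall x, w x = v (tref n s r x).

Definition delete (a : seq nat) (i : nat) : seq nat := take i a ++ drop i.+1 a.

(* v-marked words (a, i), with 0-based index i < size a *)
Definition marked (n : nat) (v : int -> int) (m : seq nat * nat) : Prop :=
  word_ok n m.1 /\ (m.2 < size m.1)%N /\ redword_of n (delete m.1 m.2) v.

Definition decr (n : nat) (a : seq nat) (i : nat) : seq nat :=
  set_nth 0%N a i ((nth 0%N a i + n - 1) %% n)%N.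

Definition little_edge (n : nat) (v : int -> int) (m m' : seq nat * nat) : Prop :=
  marked n v m /\ m'.1 = decr n m.1 m.2 /\
  ((reduced n m'.1 /\ m'.2 = m.2) \/
   (~ reduced n m'.1 /\ m'.2 <> m.2 /\ (m'.2 < size m'.1)%N /\
    redword_of n (delete m'.1 m'.2) v)).

(* phi^v(m) = m' : m' is the first reduced v-marked word strictly after m along the
   (directed) path of the Little graph starting at m *)
Definition phi_rel (n : nat) (v : int -> int) (m m' : seq nat * nat) : Prop :=
  exists (k : nat) (f : nat -> seq nat * nat),
    (0 < k)%N /\ f 0%N = m /\ f k = m' /\
    (forall j, (j < k)%N -> little_edge n v (f j) (f j.+1)) /\
    (forall j, (0 < j)%N -> (j < k)%N -> ~ reduced n (f j).1) /\
    reduced n m'.1.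

Definition RPsi_plus (n : nat) (v : int -> int) (r : int) (m : seq nat * nat) : Prop :=
  reduced n m.1 /\ Psi_plus n v r (weval n m.1) /\ marked n v m.

Definition RPsi_minus (n : nat) (v : int -> int) (r : int) (m : seq nat * nat) : Prop :=
  reduced n m.1 /\ Psi_minus n v r (weval n m.1) /\ marked n v m.

(* Write a marked word as a = b c d with marked letter c.  Then a represents v t
   where t = d^-1 s_c d swaps mark_l = d^-1(c) and mark_r = d^-1(c+1); when a is
   reduced, mark_l < mark_r, so (a, i) lies in R(Psi^+_r(v)) iff r = mark_l and in
   R(Psi^-_r(v)) iff r = mark_r (mod n).
   Decrementing the marked letter gives a word whose mark_r is congruent to the old
   mark_l.  If that word is not reduced, the strong exchange property yields exactly
   one other letter whose deletion gives v, and comparing the two deletions shows that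
   its mark_l is again congruent to the old mark_l.  So the class of mark_l is
   constant along a path of the Little graph until a reduced word is reached, and the
   mark_r of that word lies in the class: phi^v maps R(Psi^+_r(v)) to R(Psi^-_r(v)).
   A Little-graph step is determined both by its source and by its target, and there
   are finitely many marked words of each length, so the graph is a union of finite
   cycles; following a cycle forward gives phi^v, following it backward its inverse. *)

From mathcomp Require Import all_boot all_order all_algebra.
From mathcomp Require Import zify.
From Stdlib Require Import ClassicalEpsilon.
Set Implicit Arguments. Unset Strict Implicit. Unset Printing Implicit Defensive.
Import Order.TTheory GRing.Theory Num.Theory.
Local Open Scope ring_scope.

Lemma cat_split_cons (T : Type) (b d u1 u2 : seq T) x : b ++ d = u1 ++ x :: u2 ->
  (exists b1 b2, [/\ b = b1 ++ x :: b2, u1 = b1 & u2 = b2 ++ d]) \/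
  (exists d1 d2, [/\ d = d1 ++ x :: d2, u1 = b ++ d1 & u2 = d2]).
Proof.
elim: b u1 => [|y b IH] u1 /=; first by move=> ->; right; exists u1, u2.
case: u1 => [|z u1] /=; first by case=> -> <-; left; exists [::], b.
case=> -> /IH [[b1 [b2 [-> -> ->]]]|[d1 [d2 [-> -> ->]]]].
  by left; exists (z :: b1), b2.
by right; exists d1, d2.
Qed.

Lemma split_at (T : Type) (a : seq T) i : (i < size a)%N ->
  exists b c d, a = b ++ c :: d /\ size b = i.
Proof.
move=> Hi; case Ed: (drop i a) (cat_take_drop i a) (size_drop i a) => [|c d] Ea.
  by rewrite /=; lia.
by move=> _; exists (take i a), c, d; rewrite size_take Hi.
Qed.

Lemma iter_periodic (T : eqType) (f : T -> T) (s : seq T) x :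
  (forall j, iter j f x \in s) ->
  (forall j k, iter j.+1 f x = iter k.+1 f x -> iter j f x = iter k f x) ->
  exists2 N, (0 < N)%N & iter N f x = x.
Proof.
move=> in_s back; set orb := [seq iter j f x | j <- iota 0 (size s).+1].
have /(uniqPn x) [i [j [ij j_lt Eij]]] : ~~ uniq orb.
  apply/negP => /(uniq_leq_size (s2 := s)) le_orb.
  suff: (size orb <= size s)%N by rewrite size_map size_iota ltnn.
  by apply: le_orb => _ /mapP [k _ ->].
rewrite size_map size_iota in j_lt; have i_lt := ltn_trans ij j_lt.
rewrite !(nth_map 0%N) ?size_iota // !nth_iota // in Eij.
have back_t t : (t <= i)%N -> iter (i - t) f x = iter (j - t) f x.
  elim: t => [|t IH] Ht; first by rewrite !subn0.
  by apply: back; rewrite -!subSn ?subSS ?IH //; lia.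
by exists (j - i)%N; [lia | rewrite -(back_t i) ?subnn].
Qed.

Lemma classic_ex_min (P : nat -> Prop) p0 : P p0 -> exists p, P p /\ forall q, (q < p)%N -> ~ P q.
Proof.
elim/ltn_ind: p0 => p IH Hp; have [[q [qp Hq]]|no_q] := classic (exists q, (q < p)%N /\ P q).
  exact: IH Hq.
by exists p; split=> // q qp Hq; apply: no_q; exists q.
Qed.

Section Congruence.
Variable n : nat.

Lemma congP x y : reflect (exists k : int, x = y + k * n%:Z) (cong n x y).
Proof.
rewrite /cong eqz_mod_dvd; apply: (iffP dvdzP) => [[k Hk]|[k ->]]; exists k.
  by rewrite -Hk addrC subrK.
by rewrite addrC addKr.
Qed.

Lemma cong_refl x : cong n x x.
Proof. by rewrite /cong. Qed.

Lemma cong_sym x y : cong n x y = cong n y x.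
Proof. by rewrite /cong eq_sym. Qed.

Lemma cong_trans y x z : cong n x y -> cong n y z -> cong n x z.
Proof. by rewrite /cong => /eqP ->. Qed.

Lemma cong_trans_r x y z : cong n y z -> cong n x y = cong n x z.
Proof. by rewrite /cong => /eqP ->. Qed.

Lemma cong_addMr x y k : cong n (x + k * n%:Z) y = cong n x y.
Proof. by rewrite /cong addrC modzMDl. Qed.

Lemma cong_add2r z x y : cong n (x + z) (y + z) = cong n x y.
Proof. exact: eqz_modDr. Qed.

Hypothesis n_neq1 : n != 1%N.

Lemma ncong_addS x : ~~ cong n x (x + 1).
Proof.
apply/congP => -[k Hk]; have : k * n%:Z = -1 by lia.
by case: k {Hk} => k; lia.
Qed.

End Congruence.

Section Reflections.
Variable n : nat.
Implicit Types (p q x y : int).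

Variant tref_spec p q x : int -> Type :=
| TrefL of cong n x p : tref_spec p q x (x + (q - p))
| TrefR of ~~ cong n x p & cong n x q : tref_spec p q x (x - (q - p))
| TrefOut of ~~ cong n x p & ~~ cong n x q : tref_spec p q x x.

Lemma trefP p q x : tref_spec p q x (tref n p q x).
Proof.
rewrite /tref; case: ifP => [|/negbT] Hp; first exact: TrefL.
by case: ifP => [|/negbT] Hq; [apply: TrefR | apply: TrefOut].
Qed.

Lemma cong_excl p q x : ~~ cong n p q -> cong n x p -> cong n x q = false.
Proof. by move=> /negbTE <- Hp; rewrite [LHS]cong_sym (cong_trans_r _ Hp) cong_sym. Qed.

Lemma tref_l p q : tref n p q p = q.
Proof. by rewrite /tref cong_refl; lia. Qed.

Lemma tref_r p q : ~~ cong n p q -> tref n p q q = p.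
Proof. by rewrite cong_sym /tref => /negbTE ->; rewrite cong_refl; lia. Qed.

Lemma tref_sym p q : ~~ cong n p q -> tref n p q =1 tref n q p.
Proof.
move=> Hpq x; rewrite /tref; have [Hp|_] /= := boolP (cong n x p).
  by rewrite (cong_excl Hpq Hp); lia.
by case: ifP => _; lia.
Qed.

Lemma trefK p q : ~~ cong n p q -> involutive (tref n p q).
Proof.
move=> Hpq x; case: (trefP p q x) => [Hp|Hp Hq|/negbTE Hp /negbTE Hq].
- have Hq : cong n (x + (q - p)) q by case/congP: Hp => k ->; apply/congP; exists k; lia.
  by rewrite /tref (cong_excl _ Hq) ?Hq 1?cong_sym //; lia.
- have Hp' : cong n (x - (q - p)) p by case/congP: Hq => k ->; apply/congP; exists k; lia.
  by rewrite /tref Hp'; lia.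
- by rewrite /tref Hp Hq.
Qed.

Lemma tref_translate p q p' q' : cong n p p' -> q' - p' = q - p ->
  tref n p q =1 tref n p' q'.
Proof.
move=> Hp Hd x; have Hq : cong n q q'.
  by case/congP: Hp => k Hk; apply/congP; exists k; lia.
by rewrite /tref (cong_trans_r _ Hp) (cong_trans_r _ Hq) Hd.
Qed.

Lemma tref_addn p q x : tref n p q (x + n%:Z) = tref n p q x + n%:Z.
Proof.
have cong_addn y z : cong n (y + n%:Z) z = cong n y z by rewrite -[n%:Z]mul1r cong_addMr.
by rewrite /tref !cong_addn; case: ifP => _; [|case: ifP => _]; lia.
Qed.

Lemma srefE c : sref n c =1 tref n c%:Z (c%:Z + 1).
Proof. by move=> x; rewrite /tref /sref -addn1 PoszD; case: ifP => _; [|case: ifP => _]; lia. Qed.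

Lemma tref_eq_ends L U p q : (forall x, tref n L U x = tref n p q x) ->
  L < U -> p < q -> cong n p L /\ q - p = U - L.
Proof. by move=> E LU pq; have := E p; rewrite tref_l; case: (trefP L U p) => *; lia. Qed.

Hypothesis n_neq1 : n != 1%N.

Lemma srefK c : involutive (sref n c).
Proof. by move=> x; rewrite !srefE trefK ?ncong_addS. Qed.

Lemma sref_inversion c x y : x < y -> sref n c y < sref n c x -> cong n x c%:Z /\ y = x + 1.
Proof.
rewrite !srefE => xy; case: (trefP _ _ x) => [Hx|Hx Hx1|Hx Hx1];
  by case: (trefP _ _ y) => [Hy|Hy Hy1|Hy Hy1] yx; lia.
Qed.

Lemma sref_ascent c x : x < sref n c x -> cong n x c%:Z /\ sref n c x = x + 1.
Proof. by rewrite srefE; case: (trefP c%:Z (c%:Z + 1) x) => *; lia. Qed.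

End Reflections.

Section Periodic.
Variable n : nat.
Implicit Types (p q x y : int) (f : int -> int).

Definition periodic f := forall x, f (x + n%:Z) = f x + n%:Z.

Lemma periodicMz f : periodic f -> forall k x, f (x + k * n%:Z) = f x + k * n%:Z.
Proof.
move=> Hf; have Hnat (m : nat) x : f (x + m%:Z * n%:Z) = f x + m%:Z * n%:Z.
  elim: m x => [|m IH] x; first by rewrite !mul0r !addr0.
  by rewrite -addn1 PoszD mulrDl mul1r addrA Hf IH addrA.
case=> m x; first exact: Hnat.
have := Hnat m.+1 (x + Negz m * n%:Z).
by rewrite NegzE mulNr addrNK => ->; rewrite addrK.
Qed.

Lemma periodic_cong f : periodic f -> injective f -> forall x y, cong n (f x) (f y) = cong n x y.
Proof.
move=> Hf inj_f x y; apply/congP/congP => -[k Hk]; exists k; last by rewrite Hk periodicMz.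
by apply: inj_f; rewrite periodicMz.
Qed.

Lemma periodic_conj f p q x : periodic f -> injective f ->
  f (tref n p q x) = tref n (f p) (f q) (f x).
Proof.
move=> Hf inj_f; have fcong := periodic_cong Hf inj_f.
case: (trefP n p q x) => [Hp|/negbTE Hp Hq|/negbTE Hp /negbTE Hq];
  rewrite /tref !fcong ?Hp ?Hq //.
- case/congP: Hp => k ->; rewrite (_ : p + k * n%:Z + (q - p) = q + k * n%:Z); last lia.
  by rewrite !periodicMz //; lia.
- case/congP: Hq => k ->; rewrite (_ : q + k * n%:Z - (q - p) = p + k * n%:Z); last lia.
  by rewrite !periodicMz //; lia.
Qed.

End Periodic.

Section Words.
Variable n : nat.
Hypothesis n_neq1 : n != 1%N.
Implicit Types (a b : seq nat) (c : nat) (p q x y : int).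

Lemma weval_cat a b x : weval n (a ++ b) x = weval n a (weval n b x).
Proof. by elim: a => //= c a ->. Qed.

Lemma weval_periodic a : periodic n (weval n a).
Proof. by elim: a => [|c a IH] x //=; rewrite IH srefE tref_addn -srefE. Qed.

Lemma wevalK a : cancel (weval n a) (weval n (rev a)).
Proof. by elim: a => [|c a IH] x //=; rewrite rev_cons -cats1 weval_cat /= srefK. Qed.

Lemma weval_revK a : cancel (weval n (rev a)) (weval n a).
Proof. by elim: a => [|c a IH] x //=; rewrite rev_cons -cats1 weval_cat /= IH srefK. Qed.

Lemma weval_inj a : injective (weval n a).
Proof. exact: can_inj (wevalK a). Qed.

Lemma weval_cong a x y : cong n (weval n a x) (weval n a y) = cong n x y.
Proof. by apply: periodic_cong; [apply: weval_periodic | apply: weval_inj]. Qed.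

Lemma weval_tref a p q x :
  weval n a (tref n p q x) = tref n (weval n a p) (weval n a q) (weval n a x).
Proof. by apply: periodic_conj; [apply: weval_periodic | apply: weval_inj]. Qed.

Lemma word_ok_cat a b : word_ok n (a ++ b) = word_ok n a && word_ok n b.
Proof. exact: all_cat. Qed.

Lemma word_ok_delete a i : word_ok n a -> word_ok n (delete a i).
Proof.
move=> /allP ok_a; rewrite word_ok_cat; apply/andP.
by split; apply/allP => x Hx; apply: ok_a; [apply: mem_take Hx | apply: mem_drop Hx].
Qed.

Lemma delete_cat a c b : delete (a ++ c :: b) (size a) = a ++ b.
Proof. by rewrite /delete take_size_cat // -cat_rcons drop_size_cat // size_rcons. Qed.

Lemma word_ok_del a c b : word_ok n (a ++ c :: b) -> word_ok n (a ++ b).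
Proof. by rewrite -(delete_cat a c b); apply: word_ok_delete. Qed.

End Words.

Section Exchange.
Variable n : nat.
Hypothesis n_neq1 : n != 1%N.
Implicit Types (a b d e u : seq nat) (c : nat) (p q x y : int) (v w : int -> int).

Definition inversion w p q := (p - q) * (w p - w q) < 0.

Lemma inversion_sym w p q : inversion w p q = inversion w q p.
Proof. by rewrite /inversion -mulrNN !opprB. Qed.

Lemma inversionE w p q : p < q -> inversion w p q = (w q < w p).
Proof. by move=> pq; rewrite /inversion nmulr_rlt0 ?subr_lt0 ?subr_gt0. Qed.

Lemma strong_exchange a p q : ~~ cong n p q -> inversion (weval n a) p q ->
  exists a1 c a2, a = a1 ++ c :: a2 /\
    forall y, weval n (a1 ++ a2) y = weval n a (tref n p q y).
Proof.
wlog pq : p q / p < q => [hwlog npq|npq].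
  case: (ltrgtP p q) => [pq|qp|Epq]; first exact: hwlog.
    rewrite inversion_sym => /(hwlog q p qp); rewrite cong_sym => /(_ npq).
    move=> [a1 [c [a2 [Ea a12_E]]]]; exists a1, c, a2; split=> // y.
    by rewrite a12_E tref_sym // cong_sym.
  by rewrite Epq cong_refl in npq.
rewrite inversionE //; elim: a => [|c a IH] /=; first lia.
case: (ltrgtP (weval n a q) (weval n a p)) => [inv_pq _|asc_pq inv_c|/(weval_inj n_neq1) Epq].
- have [a1 [c' [a2 [-> a12_E]]]] := IH inv_pq.
  by exists (c :: a1), c', a2; split=> // y /=; rewrite a12_E.
- have [Hc Eq] := sref_inversion n_neq1 asc_pq inv_c.
  exists [::], c, a; split=> // y /=.
  have sref_tref : sref n c =1 tref n (weval n a p) (weval n a q).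
    by move=> x; rewrite srefE Eq; apply: tref_translate; [rewrite cong_sym | lia].
  by rewrite weval_tref // sref_tref trefK // weval_cong.
- by move: npq; rewrite Epq cong_refl.
Qed.

Lemma reduced_coverE u v a p q : redword_of n u v -> word_ok n a ->
  (forall y, weval n a y = v (tref n p q y)) -> ~~ cong n p q ->
  size a = (size u).+1 -> reduced n a <-> ~~ inversion v p q.
Proof.
wlog pq : p q / p < q => [hwlog red_u ok_a a_v npq|].
  case: (ltrgtP p q) => [pq|qp|Epq]; first exact: hwlog.
    rewrite inversion_sym; apply: hwlog => //; last by rewrite cong_sym.
    by move=> y; rewrite a_v tref_sym.
  by rewrite Epq cong_refl in npq.
move=> [[ok_u u_v] u_min] ok_a a_v npq size_a; rewrite inversionE //.
split=> [[_ a_min]|vpq].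
  apply/negP => vqp.
  have [u1 [c [u2 [Eu u12_v]]]] : exists u1 c u2, u = u1 ++ c :: u2 /\
      forall y, weval n (u1 ++ u2) y = weval n u (tref n p q y).
    by apply: strong_exchange; rewrite ?inversionE ?u_v.
  have : (size a <= size (u1 ++ u2))%N.
    apply: a_min; split; first by rewrite Eu in ok_u; apply: word_ok_del ok_u.
    by move=> y; rewrite u12_v u_v a_v.
  by rewrite size_a Eu !size_cat /=; lia.
have vpq_neq : v p != v q.
  by apply/eqP; rewrite -!u_v => /(weval_inj n_neq1) Epq; rewrite Epq cong_refl in npq.
split; first by split.
move=> b [ok_b b_a]; rewrite leqNgt; apply/negP => size_b.
have [b1 [c [b2 [Eb b12_v]]]] : exists b1 c b2, b = b1 ++ c :: b2 /\
    forall y, weval n (b1 ++ b2) y = weval n b (tref n p q y).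
  apply: strong_exchange; rewrite // inversionE // !b_a !a_v tref_l tref_r //.
  by rewrite lt_neqAle vpq_neq leNgt.
have : (size u <= size (b1 ++ b2))%N.
  apply: u_min; split; first by rewrite Eb in ok_b; apply: word_ok_del ok_b.
  by move=> y; rewrite b12_v b_a a_v trefK.
by move: size_b; rewrite size_a Eb !size_cat /=; lia.
Qed.

Lemma reduced_letter_ascent b e c d w : redword_of n (b ++ e ++ c :: d) w ->
  weval n e c%:Z < weval n e (c%:Z + 1).
Proof.
move=> [[ok_w w_E] w_min].
case: (ltrgtP (weval n e c%:Z) (weval n e (c%:Z + 1))) => // [desc|/(weval_inj n_neq1)];
  last by lia.
have [e1 [c' [e2 [Ee e12_E]]]] : exists e1 c' e2, e = e1 ++ c' :: e2 /\
    forall y, weval n (e1 ++ e2) y = weval n e (tref n c%:Z (c%:Z + 1) y).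
  by apply: strong_exchange; rewrite ?ncong_addS // inversionE //; lia.
have : (size (b ++ e ++ c :: d) <= size (b ++ (e1 ++ e2) ++ d))%N.
  apply: w_min; split.
    by move: ok_w; rewrite Ee !word_ok_cat /= => /and3P [-> /and3P [-> _ ->] /andP [_ ->]].
  move=> y; rewrite -w_E (weval_cat n b) (weval_cat n (e1 ++ e2)) e12_E.
  by rewrite (weval_cat n b) (weval_cat n e) /= srefE.
by rewrite Ee !size_cat /=; lia.
Qed.

End Exchange.

Section Marks.
Variable n : nat.
Hypothesis n_neq1 : n != 1%N.
Implicit Types (a b d e u : seq nat) (c i j : nat) (x y : int) (v : int -> int).

(* [weval n (rev d)] inverts [weval n d]: d^-1 s_c d swaps [refl_l d c] and [refl_r d c]. *)
Definition refl_l d c := weval n (rev d) c%:Z.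
Definition refl_r d c := weval n (rev d) (c%:Z + 1).

Definition mark_l a i := refl_l (drop i.+1 a) (nth 0%N a i).
Definition mark_r a i := refl_r (drop i.+1 a) (nth 0%N a i).

Lemma weval_refl_l d c : weval n d (refl_l d c) = c%:Z.
Proof. exact: weval_revK. Qed.

Lemma weval_refl_r d c : weval n d (refl_r d c) = c%:Z + 1.
Proof. exact: weval_revK. Qed.

Lemma refl_ncong d c : ~~ cong n (refl_l d c) (refl_r d c).
Proof. by rewrite -(weval_cong n_neq1 d) weval_refl_l weval_refl_r ncong_addS. Qed.

Lemma weval_letter b c d y :
  weval n (b ++ c :: d) y = weval n (b ++ d) (tref n (refl_l d c) (refl_r d c) y).
Proof.
by rewrite !weval_cat /= weval_tref // weval_refl_l weval_refl_r srefE.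
Qed.

Lemma mark_l_cat b c d : mark_l (b ++ c :: d) (size b) = refl_l d c.
Proof. by rewrite /mark_l nth_cat ltnn subnn /= -cat_rcons drop_size_cat // size_rcons. Qed.

Lemma mark_r_cat b c d : mark_r (b ++ c :: d) (size b) = refl_r d c.
Proof. by rewrite /mark_r nth_cat ltnn subnn /= -cat_rcons drop_size_cat // size_rcons. Qed.

Lemma weval_mark a i y : (i < size a)%N ->
  weval n a y = weval n (delete a i) (tref n (mark_l a i) (mark_r a i) y).
Proof.
by case/split_at => b [c [d [-> <-]]]; rewrite delete_cat mark_l_cat mark_r_cat weval_letter.
Qed.

Lemma mark_ncong a i : ~~ cong n (mark_l a i) (mark_r a i).
Proof. exact: refl_ncong. Qed.

Lemma refl_cross_cong b c e c' d v : redword_of n (b ++ e ++ c' :: d) v ->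
  represents n (b ++ c :: e ++ d) v ->
  cong n (refl_r (e ++ c' :: d) c) (refl_l d c') /\
  cong n (refl_l (e ++ c' :: d) c) (refl_r d c').
Proof.
move=> red1 [_ rep2]; have [[_ rep1] _] := red1.
have e_sref z : weval n e (sref n c' z) = sref n c (weval n e z).
  apply: (weval_inj n_neq1 (a := b)); rewrite -[z](weval_revK n_neq1 d).
  by have := rep1 (weval n (rev d) z); rewrite -rep2 !weval_cat /= weval_cat.
have [ec'_c ec'S] : cong n (weval n e c'%:Z) c%:Z /\ weval n e (c'%:Z + 1) = weval n e c'%:Z + 1.
  have := reduced_letter_ascent n_neq1 red1.
  have -> : c'%:Z + 1 = sref n c' c'%:Z by rewrite srefE tref_l.
  by rewrite e_sref; apply: sref_ascent.
split; rewrite -(weval_cong n_neq1 (e ++ c' :: d)) ?weval_refl_l ?weval_refl_r.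
all: rewrite !weval_cat /= ?weval_refl_l ?weval_refl_r !srefE ?tref_l ?tref_r ?ncong_addS //.
  by rewrite ec'S PoszD cong_add2r cong_sym.
by rewrite cong_sym.
Qed.

Lemma marks_cong_lt a i j v : (i < j < size a)%N ->
  redword_of n (delete a i) v -> redword_of n (delete a j) v ->
  cong n (mark_r a i) (mark_l a j) /\ cong n (mark_l a i) (mark_r a j).
Proof.
case/andP=> ij /split_at [a1 [c' [d [-> Ej]]]]; subst j.
have [b [c [e [-> <-]]]] := split_at ij.
rewrite delete_cat mark_l_cat mark_r_cat -catA /= delete_cat mark_l_cat mark_r_cat.
by rewrite -catA => red_i [rep_j _]; apply: refl_cross_cong red_i rep_j.
Qed.

Lemma marks_cong a i j v : i != j -> (i < size a)%N -> (j < size a)%N ->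
  redword_of n (delete a i) v -> redword_of n (delete a j) v ->
  cong n (mark_r a i) (mark_l a j).
Proof.
move=> /negPf nij Hi Hj red_i red_j; case: (ltngtP i j) nij => // [ij|ji] _.
  by case: (marks_cong_lt (i := i) (j := j) _ red_i red_j); rewrite ?ij.
by case: (marks_cong_lt (i := j) (j := i) _ red_j red_i) => [|_]; rewrite ?ji // cong_sym.
Qed.

Lemma at_most_two_marks a i j k v : [&& i != j, j != k & i != k] ->
  (i < size a)%N -> (j < size a)%N -> (k < size a)%N ->
  redword_of n (delete a i) v -> redword_of n (delete a j) v -> redword_of n (delete a k) v ->
  False.
Proof.
case/and3P=> ij jk ik Hi Hj Hk red_i red_j red_k.
have ji : j != i by rewrite eq_sym.
have := mark_ncong a i; rewrite (cong_trans_r _ (marks_cong ik Hi Hk red_i red_k)).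
rewrite -(cong_trans_r _ (marks_cong jk Hj Hk red_j red_k)) cong_sym.
by rewrite (marks_cong ji Hj Hi red_j red_i).
Qed.

Lemma weval_delete_swap b c e c' d :
  (forall y, weval n (b ++ e ++ d) y = weval n (b ++ c :: e ++ c' :: d) y) ->
  forall y, weval n (b ++ e ++ c' :: d) y = weval n (b ++ c :: e ++ d) y.
Proof.
move=> del2 y; have e_sref z : weval n e z = sref n c (weval n e (sref n c' z)).
  rewrite -[z](weval_revK n_neq1 d); apply: (weval_inj n_neq1 (a := b)).
  by have := del2 (weval n (rev d) z); rewrite !weval_cat /= !weval_cat.
by rewrite !weval_cat /= weval_cat /= [in RHS]e_sref srefK.
Qed.

Lemma reduced_mark_lt a i v : reduced n a -> (i < size a)%N ->
  redword_of n (delete a i) v -> mark_l a i < mark_r a i.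
Proof.
move=> red_a /split_at [b [c [d [Ea <-]]]]; subst a.
rewrite delete_cat mark_l_cat mark_r_cat => red_v; have [[ok_v v_E] _] := red_v.
have asc : v (refl_l d c) < v (refl_r d c).
  rewrite -!v_E !weval_cat weval_refl_l weval_refl_r.
  exact: (reduced_letter_ascent n_neq1 (b := [::]) red_a).
have a_v y : weval n (b ++ c :: d) y = v (tref n (refl_l d c) (refl_r d c) y).
  by rewrite weval_letter v_E.
have size_a : size (b ++ c :: d) = (size (b ++ d)).+1 by rewrite !size_cat addnS.
have not_inv := (reduced_coverE n_neq1 red_v red_a.1.1 a_v (refl_ncong d c) size_a).1 red_a.
case: ltrgtP not_inv => // [UL|EL _]; first by rewrite inversion_sym inversionE // asc.
by have := refl_ncong d c; rewrite EL cong_refl.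
Qed.

Lemma exists_other_mark a i v : word_ok n a -> (i < size a)%N ->
  redword_of n (delete a i) v -> ~ reduced n a ->
  exists j, [/\ j != i, (j < size a)%N & redword_of n (delete a j) v].
Proof.
move=> ok_a /split_at [b [c [d [Ea <-]]]]; subst a.
rewrite delete_cat => red_v nred_a; have [[ok_v v_E] v_min] := red_v.
have a_v y : weval n (b ++ c :: d) y = v (tref n (refl_l d c) (refl_r d c) y).
  by rewrite weval_letter v_E.
have size_a : size (b ++ c :: d) = (size (b ++ d)).+1 by rewrite !size_cat addnS.
have inv : inversion (weval n (b ++ d)) (refl_l d c) (refl_r d c).
  rewrite /inversion !v_E; apply/negPn/negP => /(reduced_coverE n_neq1 red_v ok_a a_v).
  by move=> /(_ (refl_ncong d c) size_a).
have [u1 [x [u2 [Eu u12_a]]]] := strong_exchange n_neq1 (refl_ncong d c) inv.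
have del2 y : weval n (u1 ++ u2) y = weval n (b ++ c :: d) y by rewrite u12_a weval_letter.
have red_del u : represents n u v -> size u = size (b ++ d) -> redword_of n u v.
  by move=> rep_u size_u; split=> // u' /v_min; rewrite size_u.
case: (cat_split_cons Eu) => [[b1 [b2 [Eb E1 E2]]]|[d1 [d2 [Ed E1 E2]]]].
- subst b u1 u2; exists (size b1); rewrite -catA /= delete_cat.
  split; [by rewrite size_cat /=; lia | by rewrite size_cat /=; lia |].
  apply: red_del; last by rewrite !size_cat /=; lia.
  split; first by rewrite -catA in ok_a; exact: word_ok_del ok_a.
  move=> y; rewrite (@weval_delete_swap b1 x b2 c d) -?v_E -?catA // => z.
  by rewrite del2 -catA.
- subst d u1 u2; exists (size (b ++ c :: d1)).
  have -> : b ++ c :: d1 ++ x :: d2 = (b ++ c :: d1) ++ x :: d2 by rewrite -catA.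
  rewrite delete_cat -catA /=.
  split; [by rewrite size_cat /=; lia | by rewrite !size_cat /= size_cat /=; lia |].
  apply: red_del; last by rewrite !size_cat /=; lia.
  split; first by apply: (@word_ok_del n (b ++ c :: d1) x d2); rewrite -catA.
  move=> y; rewrite -catA -(@weval_delete_swap b c d1 x d2) ?v_E // => z.
  by rewrite -del2 catA.
Qed.

End Marks.

Section Decrement.
Variable n : nat.
Hypothesis n_neq1 : n != 1%N.
Implicit Types (a b d : seq nat) (c i : nat).

Lemma decr_cat b c d : decr n (b ++ c :: d) (size b) = b ++ ((c + n - 1) %% n)%N :: d.
Proof. by rewrite /decr nth_cat ltnn subnn; elim: b => //= x b ->. Qed.

Lemma decr_letterE c : (c < n)%N -> ((c + n - 1) %% n = if c is c'.+1 then c' else n.-1)%N.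
Proof.
case: c => [|c] c_lt; first by rewrite add0n subn1 modn_small // prednK //; lia.
by rewrite addSn subn1 /= modnDr modn_small //; lia.
Qed.

Lemma decr_mark_cong a i : word_ok n a -> (i < size a)%N ->
  cong n (mark_r n (decr n a i) i) (mark_l n a i).
Proof.
move=> ok_a /split_at [b [c [d [Ea <-]]]]; subst a.
have c_lt : (c < n)%N by move: ok_a; rewrite /word_ok all_cat => /and3P [].
rewrite decr_cat mark_l_cat mark_r_cat /refl_l /refl_r weval_cong ?decr_letterE //.
case: c c_lt {ok_a} => [|c] c_lt; last by rewrite -addn1 PoszD cong_refl.
have -> : (n.-1)%:Z + 1 = 0 + 1 * n%:Z by lia.
by rewrite cong_addMr cong_refl.
Qed.

Lemma size_decr a i : (i < size a)%N -> size (decr n a i) = size a.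
Proof. by move=> Hi; rewrite /decr size_set_nth; apply/maxn_idPr. Qed.

Lemma delete_decr a i : (i < size a)%N -> delete (decr n a i) i = delete a i.
Proof. by case/split_at=> [b [c [d [-> <-]]]]; rewrite decr_cat !delete_cat. Qed.

Lemma word_ok_decr a i : word_ok n a -> (i < size a)%N -> word_ok n (decr n a i).
Proof.
move=> ok_a /split_at [b [c [d [Ea <-]]]]; move: ok_a; rewrite Ea decr_cat /word_ok !all_cat /=.
by case/and3P=> -> c_lt ->; rewrite ltn_mod; lia.
Qed.

Lemma decr_inj a a' i : word_ok n a -> word_ok n a' -> (i < size a)%N -> (i < size a')%N ->
  decr n a i = decr n a' i -> a = a'.
Proof.
move=> ok_a ok_a' /split_at [b [c [d [Ea Eb]]]] /split_at [b' [c' [d' [Ea' Eb']]]].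
subst a a'; move: ok_a ok_a'; rewrite /word_ok !all_cat /= => /and3P [_ c_lt _] /and3P [_ c'_lt _].
rewrite -{1}Eb -Eb' !decr_cat => /eqP; rewrite eqseq_cat ?Eb ?Eb' //.
case/andP=> /eqP -> /=; rewrite eqseq_cons => /andP [/eqP E /eqP ->].
suff -> : c = c' by [].
by move: E; rewrite !decr_letterE //; case: c c_lt => [|c]; case: c' c'_lt => [|c']; lia.
Qed.

End Decrement.

Section LittleGraph.
Variable n : nat.
Hypothesis n_neq1 : n != 1%N.
Variable v : int -> int.
Implicit Types (m : seq nat * nat).

Lemma little_edge_marked m m' : little_edge n v m m' -> marked n v m'.
Proof.
case: m m' => a i [a' j] [[ok_a [Hi red_i]] [/= -> [[_ ->]|[_ [_ [Hj red_j]]]]]].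
  by split; rewrite ?word_ok_decr ?size_decr ?delete_decr.
by split; rewrite ?word_ok_decr.
Qed.

Lemma little_edge_size m m' : little_edge n v m m' -> size m'.1 = size m.1.
Proof. by case: m m' => a i [a' j] [[_ [Hi _]] [/= -> _]]; rewrite size_decr. Qed.

Lemma little_edge_exists m : marked n v m -> exists m', little_edge n v m m'.
Proof.
case: m => a i [ok_a [Hi red_i]].
have ok_a' := word_ok_decr n_neq1 ok_a Hi.
have Hi' : (i < size (decr n a i))%N by rewrite size_decr.
have red_i' : redword_of n (delete (decr n a i) i) v by rewrite delete_decr.
have [red_a'|nred_a'] := classic (reduced n (decr n a i)).
  by exists (decr n a i, i); split=> //; split=> //; left.
have [j [ji Hj red_j]] := exists_other_mark n_neq1 ok_a' Hi' red_i' nred_a'.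
by exists (decr n a i, j); split=> //; split=> //; right; split=> //; split=> //; apply/eqP.
Qed.

Lemma little_edge_functional m m1 m2 :
  little_edge n v m m1 -> little_edge n v m m2 -> m1 = m2.
Proof.
case: m m1 m2 => a i [a1 j1] [a2 j2] [[ok_a [Hi red_i]] [/= -> e1]] [_ [/= -> e2]].
congr (_, _).
case: e1 e2 => [[_ ->]|[nred1 [ji1 [Hj1 red_j1]]]] [[red2 ->]|[nred2 [ji2 [Hj2 red_j2]]]] //.
apply/eqP/negPn/negP => j12.
apply: (at_most_two_marks n_neq1 (i := i) _ _ Hj1 Hj2 _ red_j1 red_j2).
- by rewrite j12 /=; apply/andP; split; apply/eqP => /esym.
- by rewrite size_decr.
- by rewrite delete_decr.
Qed.

Lemma little_edge_injective m1 m2 m' :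
  little_edge n v m1 m' -> little_edge n v m2 m' -> m1 = m2.
Proof.
case: m1 m2 m' => a1 i1 [a2 i2] [a j] [[ok1 [Hi1 red1]] [/= E1 e1]] [[ok2 [Hi2 red2]] [/= E2 e2]].
suff Ei : i1 = i2.
  by subst i2; congr (_, _); apply: (decr_inj n_neq1 ok1 ok2 Hi1 Hi2); rewrite -E1 -E2.
case: e1 e2 => [[_ <-]|[nred1 [ji1 [Hj1 red_j1]]]] [[red2' <-]|[nred2 [ji2 [Hj2 red_j2]]]] //.
apply/eqP/negPn/negP => i12.
apply: (at_most_two_marks n_neq1 (i := i1) (j := i2) _ _ _ Hj1 _ _ red_j1).
- by rewrite i12 /=; apply/andP; split; apply/eqP => /esym.
- by rewrite E1 size_decr.
- by rewrite E2 size_decr.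
- by rewrite E1 delete_decr.
- by rewrite E2 delete_decr.
Qed.

Lemma little_edge_reduced_cong m m' : little_edge n v m m' -> reduced n m'.1 ->
  cong n (mark_r n m'.1 m'.2) (mark_l n m.1 m.2).
Proof.
case: m m' => a i [a' j] [[ok_a [Hi _]] [/= -> [[_ ->]|[nred _]]]] //= _.
exact: decr_mark_cong.
Qed.

Lemma little_edge_nonreduced_cong m m' : little_edge n v m m' -> ~ reduced n m'.1 ->
  cong n (mark_l n m'.1 m'.2) (mark_l n m.1 m.2).
Proof.
case: m m' => a i [a' j] [[ok_a [Hi red_i]] [/= -> [[red _]|[_ [ji [Hj red_j]]]]]] //= _.
have Hi' : (i < size (decr n a i))%N by rewrite size_decr.
have mark_j : cong n (mark_l n (decr n a i) j) (mark_r n (decr n a i) i).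
  rewrite cong_sym; apply: (marks_cong n_neq1 _ Hi' Hj _ red_j).
    by apply/eqP => /esym.
  by rewrite delete_decr.
exact: cong_trans mark_j (decr_mark_cong n_neq1 ok_a Hi).
Qed.

Definition little_next m := epsilon (inhabits ([::], 0%N)) (little_edge n v m).

Lemma little_nextP m : marked n v m -> little_edge n v m (little_next m).
Proof. by move=> /little_edge_exists; apply: epsilon_spec. Qed.

Lemma iter_little_next_marked j m : marked n v m ->
  marked n v (iter j little_next m) /\ size (iter j little_next m).1 = size m.1.
Proof.
move=> mk_m; elim: j => [|j [mk_j size_j]] //=.
have edge_j := little_nextP mk_j.
by rewrite (little_edge_size edge_j); split=> //; apply: little_edge_marked edge_j.
Qed.

Lemma iter_little_next_edge j m : marked n v m ->
  little_edge n v (iter j little_next m) (iter j.+1 little_next m).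
Proof. by move=> /(iter_little_next_marked j) [/little_nextP]. Qed.

Fixpoint words_of_size l : seq (seq nat) :=
  if l is l'.+1 then [seq c :: w | c <- iota 0 n, w <- words_of_size l'] else [:: [::]].

Lemma mem_words_of_size a : word_ok n a -> a \in words_of_size (size a).
Proof.
elim: a => [|c a IH] //= /andP [c_lt /IH a_in].
by apply: (allpairs_f (fun c w => c :: w)); rewrite // mem_iota.
Qed.

Lemma little_next_periodic m : marked n v m -> exists2 N, (0 < N)%N & iter N little_next m = m.
Proof.
move=> mk_m; pose cands l := [seq (a, i) | a <- words_of_size l, i <- iota 0 l].
apply: (iter_periodic (s := cands (size m.1))) => [j|j k E].
  have [[ok_j [Hj _]] <-] := iter_little_next_marked j mk_m.
  move: (iter j little_next m) ok_j Hj => [a i] /= ok_a Hi.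
  by apply: (allpairs_f (fun a i => (a, i))); rewrite ?mem_iota ?mem_words_of_size.
apply: (little_edge_injective (m' := iter j.+1 little_next m)); first exact: iter_little_next_edge.
by rewrite E; apply: iter_little_next_edge.
Qed.

Lemma little_path_iter m k f : f 0%N = m ->
  (forall j, (j < k)%N -> little_edge n v (f j) (f j.+1)) ->
  forall j, (j <= k)%N -> f j = iter j little_next m.
Proof.
move=> f0 path_f; elim=> [|j IH] Hj; first by rewrite f0.
rewrite /= -IH; last exact: ltnW.
apply: little_edge_functional (path_f j Hj) _.
by apply: little_nextP; case: (path_f j Hj).
Qed.

Lemma phi_rel_functional m m1 m2 : phi_rel n v m m1 -> phi_rel n v m m2 -> m1 = m2.
Proof.
move=> [k1 [f [k1_pos [f0 [<- [path_f [nred_f red_f]]]]]]].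
move=> [k2 [g [k2_pos [g0 [<- [path_g [nred_g red_g]]]]]]].
have Ef := little_path_iter f0 path_f; have Eg := little_path_iter g0 path_g.
case: (ltngtP k1 k2) => [lt12|lt21|Ek]; last by rewrite Ef // Eg ?Ek.
  by exfalso; apply: (nred_g k1 k1_pos lt12); rewrite Eg ?(ltnW lt12) // -Ef.
by exfalso; apply: (nred_f k2 k2_pos lt21); rewrite Ef ?(ltnW lt21) // -Eg.
Qed.

Lemma phi_rel_exists m : marked n v m -> reduced n m.1 -> exists m', phi_rel n v m m'.
Proof.
move=> mk_m red_m; have [N N_pos EN] := little_next_periodic mk_m.
pose P p := (0 < p)%N /\ reduced n (iter p little_next m).1.
have [p [[p_pos red_p] p_min]] : exists p, P p /\ forall q, (q < p)%N -> ~ P q.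
  by apply: (classic_ex_min (p0 := N)); rewrite /P EN.
exists (iter p little_next m), p, (fun j => iter j little_next m).
do 3!split=> //; split; last split=> //.
  by move=> j _; apply: iter_little_next_edge mk_m.
by move=> j j_pos jp red_j; apply: (p_min j jp).
Qed.

Lemma phi_rel_target m m' : phi_rel n v m m' -> marked n v m' /\ reduced n m'.1.
Proof.
move=> [k [f [k_pos [_ [<- [path_f [_ red_k]]]]]]]; split=> //.
by rewrite -(prednK k_pos); apply: little_edge_marked (path_f _ _); rewrite prednK.
Qed.

Lemma phi_rel_cong m m' : phi_rel n v m m' -> cong n (mark_r n m'.1 m'.2) (mark_l n m.1 m.2).
Proof.
move=> [k [f [k_pos [f0 [<- [path_f [nred_f red_k]]]]]]].
have mark_f j : (j < k)%N -> cong n (mark_l n (f j).1 (f j).2) (mark_l n m.1 m.2).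
  elim: j => [|j IH] Hj; first by rewrite f0 cong_refl.
  apply: cong_trans (IH (ltnW Hj)).
  exact: little_edge_nonreduced_cong (path_f j (ltnW Hj)) (nred_f j.+1 isT Hj).
have Hk : (k.-1 < k)%N by lia.
rewrite -(prednK k_pos) in red_k *.
exact: cong_trans (little_edge_reduced_cong (path_f _ Hk) red_k) (mark_f _ Hk).
Qed.

Lemma phi_rel_inj m0 m1 m' : phi_rel n v m0 m' -> phi_rel n v m1 m' ->
  reduced n m0.1 -> reduced n m1.1 -> m0 = m1.
Proof.
move=> [k0 [f [k0_pos [f0 [fk [path_f [nred_f _]]]]]]].
move=> [k1 [g [k1_pos [g0 [gk [path_g [nred_g _]]]]]]] red0 red1.
have back t : (t <= minn k0 k1)%N -> f (k0 - t)%N = g (k1 - t)%N.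
  elim: t => [|t IH] Ht; first by rewrite !subn0 fk gk.
  apply: (little_edge_injective (m' := f (k0 - t)%N)).
    have -> : (k0 - t = (k0 - t.+1).+1)%N by lia.
    by apply: path_f; lia.
  rewrite IH; last lia.
  have -> : (k1 - t = (k1 - t.+1).+1)%N by lia.
  by apply: path_g; lia.
case: (ltngtP k0 k1) => [lt01|lt10|Ek].
- exfalso; apply: (nred_g (k1 - k0)%N); [lia | lia |].
  by rewrite -back ?subnn ?f0 //; lia.
- exfalso; apply: (nred_f (k0 - k1)%N); [lia | lia |].
  by rewrite back ?subnn ?g0 //; lia.
- by have := back k0; rewrite subnn -Ek subnn f0 g0 minnn; apply.
Qed.

Lemma phi_rel_surj m' : marked n v m' -> reduced n m'.1 ->
  exists m, [/\ marked n v m, reduced n m.1 & phi_rel n v m m'].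
Proof.
move=> mk_m' red_m'; have [N N_pos EN] := little_next_periodic mk_m'.
pose P t := [/\ (0 < t)%N, (t <= N)%N & reduced n (iter (N - t) little_next m').1].
have [t [[t_pos tN red_t] t_min]] : exists t, P t /\ forall q, (q < t)%N -> ~ P q.
  by apply: (classic_ex_min (p0 := N)); rewrite /P subnn.
exists (iter (N - t) little_next m'); split=> //.
  by case: (iter_little_next_marked (N - t) mk_m').
exists t, (fun j => iter (N - t + j) little_next m'); rewrite addn0 subnK //.
do 3!split=> //; split; last split=> //.
  by move=> j _; rewrite addnS; apply: iter_little_next_edge mk_m'.
move=> j j_pos jt red_j; apply: (t_min (t - j)%N); first lia.
by split; [lia | lia | rewrite (_ : N - (t - j) = N - t + j)%N //; lia].
Qed.

End LittleGraph.

Section Psi.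
Variable n : nat.
Hypothesis n_neq1 : n != 1%N.
Variables (v : int -> int) (r : int).
Implicit Types (m : seq nat * nat).

Lemma weval_marked m x : marked n v m ->
  weval n m.1 x = v (tref n (mark_l n m.1 m.2) (mark_r n m.1 m.2) x).
Proof. by case: m => a i [_ [Hi [[_ del_v] _]]]; rewrite (weval_mark n_neq1 x Hi) del_v. Qed.

Lemma marked_injective m : marked n v m -> injective v.
Proof. by case=> _ [_ [[_ del_v] _]] x y; rewrite -!del_v => /(weval_inj n_neq1). Qed.

Lemma length_redword u w : redword_of n u w -> length_is n w (size u).
Proof. by move=> [rep_u u_min]; split=> //; exists u. Qed.

Lemma covers_marked m : marked n v m -> reduced n m.1 -> covers n v (weval n m.1).
Proof.
move=> mk_m red_m; split.
  exists (mark_l n m.1 m.2), (mark_r n m.1 m.2); split; first exact: mark_ncong.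
  by move=> x; apply: weval_marked.
case: m mk_m red_m => a i [_ [/= Hi red_i]] /= red_a.
exists (size (delete a i)); split; first exact: length_redword.
have -> : (size (delete a i)).+1 = size a.
  by case/split_at: Hi => b [c [d [-> <-]]]; rewrite delete_cat !size_cat addnS.
exact: length_redword.
Qed.

Lemma marked_tref_ends m p q : marked n v m -> reduced n m.1 -> p < q ->
  (~~ cong n p q /\ forall x, weval n m.1 x = v (tref n p q x)) <->
  (cong n p (mark_l n m.1 m.2) /\ q - p = mark_r n m.1 m.2 - mark_l n m.1 m.2).
Proof.
move=> mk_m red_m pq; have LU := reduced_mark_lt n_neq1 red_m mk_m.2.1 mk_m.2.2.
split=> [[_ E]|[p_L d_pq]].
  by apply: tref_eq_ends pq => // x; apply: (marked_injective mk_m); rewrite -E weval_marked.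
have E : tref n (mark_l n m.1 m.2) (mark_r n m.1 m.2) =1 tref n p q.
  by apply: tref_translate; rewrite // cong_sym.
split; last by move=> x; rewrite weval_marked // E.
case/congP: p_L => k Ep; have Eq : q = mark_r n m.1 m.2 + k * n%:Z by lia.
by rewrite Ep Eq cong_addMr cong_sym cong_addMr cong_sym mark_ncong.
Qed.

Lemma RPsi_plusP m :
  RPsi_plus n v r m <-> [/\ marked n v m, reduced n m.1 & cong n r (mark_l n m.1 m.2)].
Proof.
split=> [[red_m [[_ [s [rs Es]]] mk_m]]|[mk_m red_m r_L]].
  by split=> //; case/(marked_tref_ends mk_m red_m rs): Es.
have LU := reduced_mark_lt n_neq1 red_m mk_m.2.1 mk_m.2.2.
do 2!split=> //; split; first exact: covers_marked.
set d := mark_r n m.1 m.2 - mark_l n m.1 m.2; have rs : r < r + d by rewrite /d; lia.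
by exists (r + d); split=> //; apply/(marked_tref_ends mk_m red_m rs); split=> //; rewrite /d; lia.
Qed.

Lemma RPsi_minusP m :
  RPsi_minus n v r m <-> [/\ marked n v m, reduced n m.1 & cong n r (mark_r n m.1 m.2)].
Proof.
split=> [[red_m [[_ [s [sr Es]]] mk_m]]|[mk_m red_m /congP [k Er]]].
  split=> //; case/(marked_tref_ends mk_m red_m sr): Es => /congP [k Es'] d_sr.
  by apply/congP; exists k; lia.
have LU := reduced_mark_lt n_neq1 red_m mk_m.2.1 mk_m.2.2.
do 2!split=> //; split; first exact: covers_marked.
set d := mark_r n m.1 m.2 - mark_l n m.1 m.2; have sr : r - d < r by rewrite /d; lia.
exists (r - d); split=> //; apply/(marked_tref_ends mk_m red_m sr).
by split; [apply/congP; exists k | ]; rewrite /d; lia.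
Qed.

End Psi.

Theorem theorem11 (n : nat) (v : int -> int) (r : int) :
  (2 <= n)%N -> in_affS n v ->
  (forall m, RPsi_plus n v r m ->
     (exists m', phi_rel n v m m') /\
     (forall m1 m2, phi_rel n v m m1 -> phi_rel n v m m2 -> m1 = m2) /\
     (forall m', phi_rel n v m m' -> RPsi_minus n v r m')) /\
  (forall m', RPsi_minus n v r m' ->
     exists m, RPsi_plus n v r m /\ phi_rel n v m m' /\
       forall m0, RPsi_plus n v r m0 -> phi_rel n v m0 m' -> m0 = m).
Proof.
move=> n_gt1 _; have n_neq1 : n != 1%N by rewrite neq_ltn n_gt1 orbT.
split=> [m /(RPsi_plusP n_neq1) [mk_m red_m r_L]|m' /(RPsi_minusP n_neq1) [mk_m' red_m' r_U]].
  split; first exact: phi_rel_exists.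
  split; first exact: phi_rel_functional.
  move=> m' phi_m; have [mk_m' red_m'] := phi_rel_target n_neq1 phi_m.
  apply/(RPsi_minusP n_neq1); split=> //.
  by rewrite (cong_trans_r _ (phi_rel_cong n_neq1 phi_m)).
have [m [mk_m red_m phi_m]] := phi_rel_surj n_neq1 mk_m' red_m'.
exists m; split.
  by apply/(RPsi_plusP n_neq1); split=> //; apply: cong_trans r_U (phi_rel_cong n_neq1 phi_m).
split=> // m0 /(RPsi_plusP n_neq1) [_ red_m0 _] phi_m0.
exact: phi_rel_inj phi_m0 phi_m red_m0 red_m.
Qed.
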